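(* Let $v^1,\dots,v^k$ be a basis of $\mathfrak h^*$, let $G=(G^{ab})$ with $G^{ab}=(v^a|v^b)$ be the Gram matrix and $(G_{ab})=G^{-1}$ its inverse. For a real root $\alpha=\sum_{a=1}^k\alpha_a v^a$ define the real $k\times k$ matrix $X(\alpha)$ by $$X(\alpha)_{ab}=-\tfrac12\alpha_a\alpha_b+\tfrac14 G_{ab}.$$ Then for all $\alpha,\beta\in\lambda$ the matrices $X(\alpha)$ are symmetric, $X(\alpha)GX(\beta)-X(\beta)GX(\alpha)=0$ if $(\alpha|\beta)=0$, and $X(\alpha)GX(\beta)+X(\beta)GX(\alpha)=\frac12X(\alpha\pm\beta)$ if $(\alpha|\beta)=\mp1$ and $\alpha\pm\beta\in\lambda$. In particular, with $\phi^a_\gamma=v^a\otimes f_\gamma$ in the Clifford algebra $\mathcal S$ defined below and $\widehat J(\alpha_i):=\sum_{a,b=1}^k\sum_{\gamma,\delta=1}^lX(\alpha_i)_{ab}\Gamma(\alpha_i)_{\gamma\delta}\phi^a_\gamma\phi^b_\delta$ (the image of $X(\alpha_i)\otimes\Gamma(\alpha_i)$ in $\mathcal S$), the assignment $X_i\mapsto\widehat J(\alpha_i)$ extends to a Lie algebra homomorphism $\mathfrak k\to(\mathcal S,[\cdot,\cdot])$, i.e. a finite-dimensional representation of $\mathfrak k$.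
   Context: Let $A=(a_{ij})_{1\le i,j\le n}$ be a symmetrizable simply laced generalized Cartan matrix (off-diagonal entries $0$ or $-1$); the Dynkin diagram has an edge between $i\ne j$ iff $a_{ij}=-1$. Let $\mathfrak g$ be the split real Kac–Moody algebra of $A$ with Chevalley generators $e_i,f_i$, Cartan subalgebra $\mathfrak h$ (from a real realization, so $\dim\mathfrak h^*=2n-\mathrm{rk}(A)$), simple roots $\alpha_1,\dots,\alpha_n\in\mathfrak h^*$, real roots $\Delta^{\mathrm{re}}$, and let $(\cdot|\cdot)$ be the nondegenerate invariant symmetric bilinear form induced on $\mathfrak h^*$, with $(\alpha_i|\alpha_j)=a_{ij}$. Let $\mathfrak k$ be the fixed-point subalgebra of the Chevalley involution ($e_i\mapsto -f_i$, $f_i\mapsto-e_i$, $h\mapsto -h$), with Berman generators $X_i=e_i-f_i$; $\mathfrak k$ is presented by generators $X_1,\dots,X_n$ and relations $[X_i,[X_i,X_j]]=-X_j$ if $a_{ij}=-1$, $[X_i,X_j]=0$ if $a_{ij}=0$. Let $\lambda$ be the set of real roots consisting of the simple roots together with all $\alpha_i+\alpha_j$ for $i,j$ forming an edge of the Dynkin diagram. A generalized spin representation is a representation $\rho$ of $\mathfrak k$ with $\rho(X_i)^2=-\frac14\mathrm{id}$. Fix a finite-dimensional real vector space $S$ with positive definite inner product $q_2$ and orthonormal basis $f_1,\dots,f_l$, and a generalized spin representation $\rho:\mathfrak k\to\mathrm{End}(S)$ whose values $\rho(X_i)$ are anti-symmetric real matrices in this basis (such exist, e.g. by realifying the generalized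 spin representations with compact image of Hainke–Köhl–Levy); put $\Gamma(\alpha_i):=2\rho(X_i)$. Let $q$ be the symmetric bilinear form on $\mathfrak h^*\otimes S$ with $q(v^a\otimes f_\gamma,v^b\otimes f_\delta)=G^{ab}\delta_{\gamma\delta}$ and $\mathcal S$ the Clifford algebra: the tensor algebra of $\mathfrak h^*\otimes S$ modulo the ideal generated by $w\otimes w-\frac12q(w,w)\cdot1$ (so $vw+wv=q(v,w)$). *)

From HB Require Import structures.
From mathcomp Require Import all_boot all_order all_algebra.
From mathcomp Require Import reals.
Set Implicit Arguments. Unset Strict Implicit. Unset Printing Implicit Defensive.
Import Order.TTheory GRing.Theory Num.Theory.
Local Open Scope ring_scope.

(* h^* is modelled as 'rV[R]_d (d = dim h^* = 2n - rk A); the invariant form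
   is (x|y) = x B y^T for a symmetric nondegenerate matrix B. *)
Definition bform (R : realType) (d : nat) (B : 'M[R]_d) (x y : 'rV[R]_d) : R :=
  (x *m B *m y^T) 0 0.

Definition sroot (R : realType) (n d : nat) (Al : 'M[R]_(n, d)) (i : 'I_n)
  : 'rV[R]_d := row i Al.

Definition in_lambda (R : realType) (n d : nat) (A : 'M[R]_n)
  (Al : 'M[R]_(n, d)) (x : 'rV[R]_d) : Prop :=
  (exists i, x = sroot Al i) \/
  (exists i j, A i j = -1 /\ x = sroot Al i + sroot Al j).

(* The basis v^1..v^d of h^* is given by the rows of an invertible matrix V.
   Gram matrix G^{ab} = (v^a|v^b). *)
Definition gram (R : realType) (d : nat) (V B : 'M[R]_d) : 'M[R]_d :=
  V *m B *m V^T.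

Definition coords (R : realType) (d : nat) (V : 'M[R]_d) (x : 'rV[R]_d)
  : 'rV[R]_d := x *m invmx V.

Definition Xmat (R : realType) (d : nat) (V B : 'M[R]_d) (x : 'rV[R]_d)
  : 'M[R]_d :=
  \matrix_(a < d, b < d)
    (- (2%:R^-1) * coords V x 0 a * coords V x 0 b
     + 4%:R^-1 * invmx (gram V B) a b).

Definition comm (T : pzRingType) (x y : T) : T := x * y - y * x.

Definition Jhat (R : realType) (CA : algType R) (d l : nat)
  (phi : 'I_d -> 'I_l -> CA) (X : 'M[R]_d) (Gam : 'M[R]_l) : CA :=
  \sum_(a < d) \sum_(b < d) \sum_(g < l) \sum_(h < l)
     (X a b * Gam g h) *: (phi a g * phi b h).

From HB Require Import structures.
From mathcomp Require Import all_boot all_order all_algebra mxtens.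
From mathcomp Require Import reals.
From mathcomp Require Import ring.
Set Implicit Arguments. Unset Strict Implicit. Unset Printing Implicit Defensive.
Import Order.TTheory GRing.Theory Num.Theory.
Local Open Scope ring_scope.

(* Quadratic elements Q(P) = sum_ij P_ij psi_i psi_j of an algebra whose
   generators satisfy psi_i psi_j + psi_j psi_i = q_ij are closed under
   commutators: for skew P, [Q(P), Q(N)] = 2 Q(P q N - N q P).  Indexing the
   generators phi^a_g by pairs (a, g) gives q = G (x) 1 and
   Jhat(alpha) = Q(X(alpha) (x) Gamma(alpha)), so [Jhat(alpha), Jhat(beta)]
   is Q of 2 (X(alpha) G X(beta) (x) Gamma(alpha) Gamma(beta) - the same with
   alpha, beta swapped).  Since X(alpha) is a rank-one correction of G^-1/4,
   X(alpha) G X(beta) only depends on (alpha|beta), which yields the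
   (anti)commutation identities for X; together with Gamma_i^2 = -1,
   Gamma_i Gamma_j Gamma_i = Gamma_j on edges and [Gamma_i, Gamma_j] = 0
   otherwise, they reproduce the defining relations of k. *)

Section Commutator.
Variables (R : pzRingType) (A : algType R).
Implicit Types x y z : A.

Lemma commMr x y z : comm x (y * z) = comm x y * z + y * comm x z.
Proof. by rewrite /comm mulrBl mulrBr !mulrA addrA subrK. Qed.

Lemma commZl a x y : comm (a *: x) y = a *: comm x y.
Proof. by rewrite /comm -scalerAl -scalerAr scalerBr. Qed.

Lemma commZr a x y : comm x (a *: y) = a *: comm x y.
Proof. by rewrite /comm -scalerAl -scalerAr scalerBr. Qed.

Lemma comm_suml (I : Type) (r : seq I) (F : I -> A) y :
  comm (\sum_(i <- r) F i) y = \sum_(i <- r) comm (F i) y.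
Proof. by rewrite /comm mulr_suml mulr_sumr -sumrB. Qed.

Lemma comm_sumr (I : Type) (r : seq I) (F : I -> A) x :
  comm x (\sum_(i <- r) F i) = \sum_(i <- r) comm x (F i).
Proof. by rewrite /comm mulr_suml mulr_sumr -sumrB. Qed.
End Commutator.

Section CliffordQuadratics.
Variables (R : comPzRingType) (CA : algType R) (m : nat).
Variables (psi : 'I_m -> CA) (q : 'M[R]_m).
Hypothesis q_sym : q^T = q.
Hypothesis psi_anticomm :
  forall i j, psi i * psi j + psi j * psi i = (q i j)%:A.

Definition quad (P : 'M[R]_m) : CA := \sum_i \sum_j P i j *: (psi i * psi j).

Fact quad_is_linear : linear quad.
Proof.
move=> a P N; rewrite /quad scaler_sumr -big_split; apply: eq_bigr => i _.
rewrite scaler_sumr -big_split; apply: eq_bigr => j _.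
by rewrite !mxE scalerDl scalerA.
Qed.

HB.instance Definition _ :=
  GRing.isLinear.Build R 'M[R]_m CA *:%R quad quad_is_linear.

Lemma comm_mul_psi i j k :
  comm (psi i * psi j) (psi k) = q j k *: psi i - q i k *: psi j.
Proof.
have swap a b : psi a * psi b = (q a b)%:A - psi b * psi a.
  by rewrite -psi_anticomm addrK.
have q_symE a b : q b a = q a b by rewrite -{1}q_sym mxE.
rewrite /comm -mulrA (swap j k) mulrA (swap k i) -(q_symE i k).
by rewrite mulrBr mulrBl mulr_algr mulr_algl !mulrA opprB addrA subrK.
Qed.

Lemma comm_quad_psi P k :
  comm (quad P) (psi k) = \sum_i ((P - P^T) *m q) i k *: psi i.
Proof.
transitivity
  (\sum_i \sum_j ((P i j * q j k) *: psi i - (P i j * q i k) *: psi j)).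
  rewrite /quad comm_suml; apply: eq_bigr => i _; rewrite comm_suml.
  by apply: eq_bigr => j _; rewrite commZl comm_mul_psi scalerBr !scalerA.
under eq_bigr do rewrite sumrB.
rewrite sumrB.
rewrite (exchange_big _ _ _ _ _ (fun i j => (P i j * q i k) *: psi j)) -sumrB.
apply: eq_bigr => i _; rewrite mxE scaler_suml -sumrB.
by apply: eq_bigr => j _; rewrite !mxE -scalerBl mulrBl.
Qed.

Lemma comm_quad P N :
  comm (quad P) (quad N) =
  quad ((P - P^T) *m q *m N + N *m ((P - P^T) *m q)^T).
Proof.
transitivity
  (\sum_k \sum_l \sum_i (N k l * ((P - P^T) *m q) i k) *: (psi i * psi l)
   + \sum_k \sum_l \sum_i (N k l * ((P - P^T) *m q) i l) *: (psi k * psi i)).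
  rewrite {2}/quad comm_sumr -big_split; apply: eq_bigr => k _.
  rewrite comm_sumr -big_split; apply: eq_bigr => l _.
  rewrite commZr commMr !comm_quad_psi mulr_suml mulr_sumr.
  rewrite scalerDr !scaler_sumr; congr (_ + _); apply: eq_bigr => i _.
    by rewrite -scalerAl scalerA.
  by rewrite -scalerAr scalerA.
rewrite linearD; congr (_ + _); rewrite /quad.
  rewrite exchange_big /=.
  under eq_bigr do rewrite exchange_big /=.
  rewrite exchange_big; apply: eq_bigr => i _; apply: eq_bigr => l _.
  by rewrite mxE scaler_suml; apply: eq_bigr => k _; rewrite mulrC.
apply: eq_bigr => k _; rewrite exchange_big; apply: eq_bigr => i _.
by rewrite mxE scaler_suml; apply: eq_bigr => l _; rewrite !mxE.
Qed.

Lemma comm_quad_skew P N : P^T = - P ->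
  comm (quad P) (quad N) = quad (P *m q *m N - N *m q *m P) *+ 2.
Proof.
move=> P_skew; rewrite comm_quad P_skew opprK trmx_mul q_sym.
rewrite (linearD trmx) /= P_skew -raddfMn; congr quad.
by rewrite !mulmxDl !mulmxDr !mulmxN !mulmxA mulr2n addrACA.
Qed.
End CliffordQuadratics.

Section SpinRelations.
Variables (R : numFieldType) (l : nat).
Implicit Types g h : 'M[R]_l.
Local Notation half g := (2^-1 *: g).

Lemma half_mul g h : half g *m half h = 4^-1 *: (g *m h).
Proof. by rewrite -scalemxAl -scalemxAr scalerA -invfM -natrM. Qed.

Lemma sqr_of_half_sqr g :
  half g *m half g = - (4^-1 *: 1%:M) -> g *m g = - 1%:M.
Proof.
by rewrite half_mul -scalerN => /scalerI; apply; rewrite invr_eq0 pnatr_eq0.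
Qed.

Lemma commute_of_half_commute g h :
  half g *m half h - half h *m half g = 0 -> g *m h = h *m g.
Proof.
rewrite !half_mul -scalerBr => /eqP; rewrite scaler_eq0 invr_eq0 pnatr_eq0 /=.
by rewrite subr_eq0 => /eqP.
Qed.

Lemma sandwich_of_half_serre g h : g *m g = - 1%:M ->
  half g *m (half g *m half h - half h *m half g)
    - (half g *m half h - half h *m half g) *m half g = - half h ->
  g *m h *m g = h.
Proof.
move=> gg serre.
have quarter_eq : 4^-1 *: (g *m h *m g + h) = 4^-1 *: (h + h).
  transitivity (- (half g *m (half g *m half h - half h *m half g)
                   - (half g *m half h - half h *m half g) *m half g)).
    rewrite mulmxBr mulmxBl !half_mul -!scalemxAl -!scalemxAr !mulmxA gg.
    rewrite -(mulmxA h) gg mulNmx mulmxN mul1mx mulmx1.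
    by apply/matrixP => a b; rewrite !mxE; field.
  by rewrite serre opprK; apply/matrixP => a b; rewrite !mxE; field.
by apply: (addIr h); apply: (scalerI _ quarter_eq); rewrite invr_eq0 pnatr_eq0.
Qed.

End SpinRelations.

Section RootMatrices.
Variables (R : numFieldType) (d : nat) (G : 'M[R]_d).
Hypotheses (G_sym : G^T = G) (G_unit : G \in unitmx).
Implicit Types c e : 'rV[R]_d.

Definition Xmx c : 'M[R]_d := - 2^-1 *: (c^T *m c) + 4^-1 *: invmx G.

Lemma Xmx_sym c : (Xmx c)^T = Xmx c.
Proof. by rewrite /Xmx linearD !linearZ /= trmx_mul trmxK trmx_inv G_sym. Qed.

Lemma XmxN c : Xmx (- c) = Xmx c.
Proof. by rewrite /Xmx (linearN trmx) mulNmx mulmxN opprK. Qed.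

Lemma gform_sym c e : e *m G *m c^T = c *m G *m e^T.
Proof.
have -> : e *m G *m c^T = (c *m G *m e^T)^T.
  by rewrite !trmx_mul trmxK G_sym mulmxA.
by apply/matrixP => i j; rewrite !ord1 mxE.
Qed.

Lemma Xmx_gram_Xmx c e : Xmx c *m G *m Xmx e =
  4^-1 *: (c^T *m (c *m G *m e^T) *m e) - 8^-1 *: (c^T *m c)
  - 8^-1 *: (e^T *m e) + 16^-1 *: invmx G.
Proof.
have XG : Xmx c *m G = - 2^-1 *: (c^T *m c *m G) + 4^-1 *: 1%:M.
  by rewrite /Xmx mulmxDl -!scalemxAl mulVmx.
rewrite XG /Xmx mulmxDl !mulmxDr -!scalemxAl -!scalemxAr !mul1mx.
rewrite -[c^T *m c *m G *m invmx G]mulmxA mulmxV // mulmx1 !mulmxA.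
by apply/matrixP => i j; rewrite !mxE; field.
Qed.

Lemma Xmx_comm_orth c e :
  c *m G *m e^T = 0%:M -> Xmx c *m G *m Xmx e = Xmx e *m G *m Xmx c.
Proof.
move=> ce0; rewrite !Xmx_gram_Xmx (gform_sym c e) ce0 !mul_mx_scalar !scale0r.
by rewrite !mul0mx !scaler0 !add0r [- _ - _]addrC.
Qed.

Lemma Xmx_anticomm_add c e : c *m G *m e^T = (-1)%:M ->
  Xmx c *m G *m Xmx e + Xmx e *m G *m Xmx c = 2^-1 *: Xmx (c + e).
Proof.
move=> ce; rewrite !Xmx_gram_Xmx (gform_sym c e) ce.
rewrite !mul_mx_scalar !scaleN1r !mulNmx /Xmx (linearD trmx) mulmxDl !mulmxDr.
by apply/matrixP => i j; rewrite !mxE; field.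
Qed.

Lemma Xmx_anticomm_sub c e : c *m G *m e^T = 1%:M ->
  Xmx c *m G *m Xmx e + Xmx e *m G *m Xmx c = 2^-1 *: Xmx (c - e).
Proof.
move=> ce; rewrite -[Xmx e]XmxN Xmx_anticomm_add //.
by rewrite (linearN trmx) mulmxN ce raddfN.
Qed.

End RootMatrices.

Lemma sum_mxtens_index (V : nmodType) m n (F : 'I_(m * n) -> V) :
  \sum_k F k = \sum_i \sum_j F (mxtens_index (i, j)).
Proof.
rewrite pair_big (reindex (@mxtens_index m n)) /=.
  by apply: eq_bigr => -[].
apply: onW_bij; exists (@mxtens_unindex m n).
  exact: mxtens_indexK.
exact: mxtens_unindexK.
Qed.

Section TensorBilinear.
Variables (R : pzRingType) (m n p r : nat).
Implicit Types (A B : 'M[R]_(m, n)) (C : 'M[R]_(p, r)).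

Lemma tensmxDl A B C : (A + B) *t C = A *t C + B *t C.
Proof. by apply/matrixP => i j; rewrite !mxE mulrDl. Qed.

Lemma tensmxNr A C : A *t (- C) = - (A *t C).
Proof. by apply/matrixP => i j; rewrite !mxE mulrN. Qed.

Lemma tensmxZl a A C : (a *: A) *t C = a *: (A *t C).
Proof. by apply/matrixP => i j; rewrite !mxE mulrA. Qed.
End TensorBilinear.

Section TensorQuadratics.
Variables (R : comPzRingType) (CA : algType R) (d l : nat) (G : 'M[R]_d).
Variable psi : 'I_(d * l) -> CA.
Hypothesis G_sym : G^T = G.
Hypothesis psi_anticomm :
  forall i j, psi i * psi j + psi j * psi i = ((G *t 1%:M) i j)%:A.

Lemma comm_quad_tens X Y (g h : 'M[R]_l) : X^T = X -> g^T = - g ->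
  comm (quad psi (X *t g)) (quad psi (Y *t h)) =
  quad psi ((X *m G *m Y) *t (g *m h) - (Y *m G *m X) *t (h *m g)) *+ 2.
Proof.
move=> X_sym g_skew.
have q_sym : (G *t 1%:M)^T = G *t (1%:M : 'M_l).
  by rewrite trmx_tens G_sym trmx1.
rewrite (comm_quad_skew q_sym psi_anticomm); last first.
  by rewrite trmx_tens X_sym g_skew tensmxNr.
by rewrite !tensmx_mul !mulmx1.
Qed.
End TensorQuadratics.

Section FlatGenerators.
Variables (R : comPzRingType) (CA : algType R) (d l : nat).
Variables (phi : 'I_d -> 'I_l -> CA) (G : 'M[R]_d).

(* The generators phi^a_g re-indexed by 'I_(d * l), the index type of
   Kronecker products [*t]. *)
Definition flat_gen (k : 'I_(d * l)) : CA :=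
  phi (mxtens_unindex k).1 (mxtens_unindex k).2.

Lemma flat_gen_index a g : flat_gen (mxtens_index (a, g)) = phi a g.
Proof. by rewrite /flat_gen mxtens_indexK. Qed.

Lemma flat_gen_anticomm :
  (forall a b g h, phi a g * phi b h + phi b h * phi a g
                   = (G a b * (g == h)%:R)%:A) ->
  forall i j, flat_gen i * flat_gen j + flat_gen j * flat_gen i
              = ((G *t 1%:M) i j)%:A.
Proof.
move=> phi_anticomm i j.
case: (mxtens_indexP i) => a g; case: (mxtens_indexP j) => b h.
by rewrite !flat_gen_index tensmxE mxE phi_anticomm.
Qed.

End FlatGenerators.

Lemma Jhat_quad (R : realType) (CA : algType R) d l (phi : 'I_d -> 'I_l -> CA)
    (X : 'M[R]_d) (g : 'M[R]_l) :
  Jhat phi X g = quad (flat_gen phi) (X *t g).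
Proof.
rewrite /Jhat /quad sum_mxtens_index; apply: eq_bigr => a _.
rewrite exchange_big; apply: eq_bigr => i _.
rewrite sum_mxtens_index; apply: eq_bigr => b _; apply: eq_bigr => j _.
by rewrite tensmxE !flat_gen_index.
Qed.

Lemma scale_half_mulr2n (R : numFieldType) (V : lmodType R) (x : V) :
  (2^-1 *: x) *+ 2 = x.
Proof. by rewrite -scaler_nat scalerA mulfV ?scale1r // pnatr_eq0. Qed.

Section SerreRelations.
Variables (R : numFieldType) (CA : algType R) (d l : nat) (G : 'M[R]_d).
Variable psi : 'I_(d * l) -> CA.
Hypotheses (G_sym : G^T = G) (G_unit : G \in unitmx).
Hypothesis psi_anticomm :
  forall i j, psi i * psi j + psi j * psi i = ((G *t 1%:M) i j)%:A.
Implicit Types (c e : 'rV[R]_d) (g h : 'M[R]_l).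
Local Notation J c g := (quad psi (Xmx G c *t g)).

Lemma commJ_orth c e g h : c *m G *m e^T = 0%:M -> g^T = - g ->
  g *m h = h *m g -> comm (J c g) (J e h) = 0.
Proof.
move=> ce g_skew gh.
rewrite (comm_quad_tens G_sym psi_anticomm) ?Xmx_sym //.
by rewrite Xmx_comm_orth // gh subrr linear0 mul0rn.
Qed.

Lemma commJ_adjacent c e g h : c *m G *m e^T = (-1)%:M -> g^T = - g ->
  h *m g = - (g *m h) -> comm (J c g) (J e h) = J (c + e) (g *m h).
Proof.
move=> ce g_skew hg.
rewrite (comm_quad_tens G_sym psi_anticomm) ?Xmx_sym //.
rewrite hg tensmxNr opprK -tensmxDl Xmx_anticomm_add //.
by rewrite tensmxZl linearZ scale_half_mulr2n.
Qed.

Lemma commJ_serre c e g h :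
  c *m G *m e^T = (-1)%:M -> c *m G *m c^T = 2%:M ->
  g^T = - g -> g *m g = - 1%:M -> g *m h *m g = h ->
  comm (J c g) (comm (J c g) (J e h)) = - J e h.
Proof.
move=> ce cc g_skew gg ghg.
have hg : h *m g = - (g *m h) by rewrite -{1}ghg -mulmxA gg mulmxN mulmx1.
have c_ce : c *m G *m (c + e)^T = 1%:M.
  by rewrite (linearD trmx) /= mulmxDr cc ce -raddfD /=; congr _%:M; ring.
rewrite commJ_adjacent // (comm_quad_tens G_sym psi_anticomm) ?Xmx_sym //.
rewrite mulmxA gg ghg mulNmx mul1mx tensmxNr -opprD -tensmxDl.
rewrite Xmx_anticomm_sub // opprD addNKr XmxN.
by rewrite tensmxZl linearN linearZ /= mulNrn scale_half_mulr2n.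
Qed.
End SerreRelations.

Section Coordinates.
Variables (R : realType) (d : nat) (V B : 'M[R]_d).
Implicit Types x y : 'rV[R]_d.

Lemma gram_sym : B^T = B -> (gram V B)^T = gram V B.
Proof. by move=> B_sym; rewrite /gram !trmx_mul trmxK B_sym mulmxA. Qed.

Lemma gram_unit : V \in unitmx -> B \in unitmx -> gram V B \in unitmx.
Proof.
by move=> V_unit B_unit; rewrite /gram !unitmx_mul unitmx_tr V_unit B_unit.
Qed.

Lemma coordsD x y : coords V (x + y) = coords V x + coords V y.
Proof. exact: mulmxDl. Qed.

Lemma coordsB x y : coords V (x - y) = coords V x - coords V y.
Proof. exact: mulmxBl. Qed.

Lemma gram_coords x y : V \in unitmx ->
  coords V x *m gram V B *m (coords V y)^T = (bform B x y)%:M.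
Proof.
move=> V_unit; rewrite /coords /gram trmx_mul !mulmxA mulmxKV //.
rewrite -(mulmxA _ V^T) -trmx_mul mulVmx // trmx1 mulmx1.
exact: mx11_scalar.
Qed.

Lemma Xmat_coords x : Xmat V B x = Xmx (gram V B) (coords V x).
Proof. by apply/matrixP => a b; rewrite !mxE big_ord1 !mxE mulrA. Qed.
End Coordinates.

Theorem proposition5p1 (R : realType) (n : nat) (A : 'M[R]_n)
  (* simply laced (symmetric) generalized Cartan matrix *)
  (hAdiag : forall i, A i i = 2%:R)
  (hAoff : forall i j, i != j -> A i j = 0 \/ A i j = -1)
  (hAsym : forall i j, A i j = A j i)
  (* realization: h^* = 'rV_d, d = 2n - rk A, invariant form B,
     linearly independent simple roots (rows of Al) with (a_i|a_j) = a_ij *)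
  (d : nat) (hd : d = (2 * n - \rank A)%N)
  (B : 'M[R]_d) (hBsym : B^T = B) (hBnd : B \in unitmx)
  (Al : 'M[R]_(n, d)) (hAlfree : row_free Al)
  (hAlform : forall i j, bform B (sroot Al i) (sroot Al j) = A i j)
  (* basis v^1..v^d of h^* (rows of V) *)
  (V : 'M[R]_d) (hV : V \in unitmx)
  (* generalized spin representation rho(X_i) = 1/2 Gam i on R^l,
     anti-symmetric in the orthonormal basis f_1..f_l *)
  (l : nat) (Gam : 'I_n -> 'M[R]_l)
  (hGanti : forall i, (Gam i)^T = - Gam i)
  (hGsq : forall i, (2%:R^-1 *: Gam i) *m (2%:R^-1 *: Gam i)
                    = - (4%:R^-1 *: 1%:M))
  (hGrel1 : forall i j, A i j = -1 ->
     let r := fun k => 2%:R^-1 *: Gam k in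
     r i *m (r i *m r j - r j *m r i) - (r i *m r j - r j *m r i) *m r i
       = - r j)
  (hGrel0 : forall i j, A i j = 0 ->
     let r := fun k => 2%:R^-1 *: Gam k in
     r i *m r j - r j *m r i = 0) :
  let G := gram V B in
  (forall x y, in_lambda A Al x -> in_lambda A Al y ->
     [/\ (Xmat V B x)^T = Xmat V B x,
         bform B x y = 0 ->
           Xmat V B x *m G *m Xmat V B y - Xmat V B y *m G *m Xmat V B x = 0,
         bform B x y = -1 -> in_lambda A Al (x + y) ->
           Xmat V B x *m G *m Xmat V B y + Xmat V B y *m G *m Xmat V B x
             = 2%:R^-1 *: Xmat V B (x + y)
       & bform B x y = 1 -> in_lambda A Al (x - y) ->
           Xmat V B x *m G *m Xmat V B y + Xmat V B y *m G *m Xmat V B x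
             = 2%:R^-1 *: Xmat V B (x - y)]) /\
  (* in any associative R-algebra generated by phi^a_g subject to the
     Clifford relations phi phi' + phi' phi = q(phi, phi') (in particular in
     the Clifford algebra S), the elements J i := \hat J(alpha_i) satisfy the
     defining relations of k, i.e. X_i |-> J i extends to a Lie algebra
     homomorphism k -> (S, [.,.]). *)
  (forall (CA : algType R) (phi : 'I_d -> 'I_l -> CA),
     (forall a b g h, phi a g * phi b h + phi b h * phi a g
                      = (G a b * (g == h)%:R)%:A) ->
     let J := fun i => Jhat phi (Xmat V B (sroot Al i)) (Gam i) in
     (forall i j, A i j = -1 -> comm (J i) (comm (J i) (J j)) = - J j) /\
     (forall i j, A i j = 0 -> comm (J i) (J j) = 0)).
Proof.
move=> G.
have G_sym : G^T = G := gram_sym V hBsym.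
have G_unit : G \in unitmx := gram_unit hV hBnd.
have form x y : coords V x *m G *m (coords V y)^T = (bform B x y)%:M.
  exact: gram_coords.
split=> [x y _ _ | CA phi phi_anticomm J].
  rewrite !Xmat_coords coordsD coordsB -/G; split.
  - exact: Xmx_sym.
  - by move=> xy; apply/eqP; rewrite subr_eq0 Xmx_comm_orth // form xy.
  - by move=> xy _; rewrite Xmx_anticomm_add // form xy.
  - by move=> xy _; rewrite Xmx_anticomm_sub // form xy.
pose psi := flat_gen phi; pose c i := coords V (sroot Al i).
have psi_anticomm := flat_gen_anticomm phi_anticomm.
have J_quad i : J i = quad psi (Xmx G (c i) *t Gam i).
  by rewrite /J Jhat_quad Xmat_coords.
have c_form i j : c i *m G *m (c j)^T = (A i j)%:M by rewrite form hAlform.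
have Gam_sqr i : Gam i *m Gam i = - 1%:M := sqr_of_half_sqr (hGsq i).
split=> i j Aij; rewrite !J_quad.
  apply: (commJ_serre G_sym G_unit psi_anticomm);
    rewrite ?c_form ?Aij ?hAdiag ?hGanti ?Gam_sqr //.
  exact: sandwich_of_half_serre (Gam_sqr i) (hGrel1 i j Aij).
apply: (commJ_orth G_sym G_unit psi_anticomm); rewrite ?c_form ?Aij ?hGanti //.
exact: commute_of_half_commute (hGrel0 i j Aij).
Qed.
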